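(* Let $(t_n(x))_{n\ge0}$ be the generalized Gončarov basis associated with $(\mathfrak d,\mathcal Z)$, $\mathcal Z=(z_i)_{i\ge0}$, and let $(p_n(x))_{n\ge0}$ be the basic sequence of $\mathfrak d$. Then for $n\ge1$, $$t_n(0)=\sum_{\rho\in\mathcal R[n]}(-1)^{|\rho|}\prod_{i=0}^{|\rho|-1}p_{b_{i+1}}(z_{s_i})=\sum_{\rho\in\mathcal R[n]}(-1)^{|\rho|}p_{b_1}(z_0)\,p_{b_2}(z_{s_1})\cdots p_{b_k}(z_{s_{k-1}}),$$ where for $\rho=(B_1,\dots,B_k)$ we write $k=|\rho|$, $b_i=|B_i|$, and $s_i=b_1+\cdots+b_i$ (with $s_0=0$).
   Context: $\mathbb K$ is a field of characteristic zero; a delta operator is a linear operator $\mathfrak d$ on $\mathbb K[x]$ commuting with all shifts $E_a:f(x)\mapsto f(x+a)$ and with $\mathfrak d(x)$ a nonzero constant; its basic sequence is the unique $(p_n)$ with $\deg p_n=n$, $p_0=1$, $p_n(0)=0$ ($n\ge1$), $\mathfrak dp_n=np_{n-1}$. $\varepsilon_z$ is evaluation at $z$. The generalized Gončarov basis associated with $(\mathfrak d,\mathcal Z)$ is the unique sequence $(t_n)_{n\ge0}$ with $\deg t_n=n$ and $\varepsilon_{z_i}(\mathfrak d^{\,i}(t_n))=n!\,\delta_{i,n}$ for all $i,n$. $\mathcal R[n]$ is the set of ordered partitions of $[n]=\{1,\dots,n\}$, i.e. ordered lists $(B_1,\dots,B_k)$ of pairwise disjoint nonempty subsets with union $[n]$.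 *)

From HB Require Import structures.
From mathcomp Require Import all_boot all_order all_algebra.
Set Implicit Arguments. Unset Strict Implicit. Unset Printing Implicit Defensive.
Import Order.TTheory GRing.Theory Num.Theory.
Local Open Scope ring_scope.

Definition shiftp (K : fieldType) (a : K) (f : {poly K}) : {poly K} :=
  f \Po ('X + a%:P).

Definition is_delta (K : fieldType) (d : {linear {poly K} -> {poly K}}) : Prop :=
  (forall (a : K) (f : {poly K}), d (shiftp a f) = shiftp a (d f)) /\
  (exists c : K, c != 0 /\ d 'X = c%:P).

Definition is_basic_seq (K : fieldType) (d : {linear {poly K} -> {poly K}})
  (p : nat -> {poly K}) : Prop :=
  (forall n, size (p n) = n.+1) /\
  p 0%N = 1 /\
  (forall n, (0 < n)%N -> (p n).[0] = 0) /\
  (forall n, (0 < n)%N -> d (p n) = n%:R *: p n.-1).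

Definition is_goncarov_basis (K : fieldType) (d : {linear {poly K} -> {poly K}})
  (z : nat -> K) (t : nat -> {poly K}) : Prop :=
  (forall n, size (t n) = n.+1) /\
  (forall i n, (iter i d (t n)).[z i] = if i == n then (n`!)%:R else 0).

Definition is_ordpart (n k : nat) (B : {ffun 'I_k -> {set 'I_n}}) : bool :=
  [&& [forall i, B i != set0],
      [forall i, forall j, (i != j) ==> [disjoint B i & B j]]
    & (\bigcup_(i < k) B i == [set: 'I_n])].

(* s_i = b_1 + ... + b_i (0-indexed blocks: sum of sizes of blocks before i) *)
Definition psum (n k : nat) (B : {ffun 'I_k -> {set 'I_n}}) (i : 'I_k) : nat :=
  (\sum_(j < k | (j < i)%N) #|B j|)%N.

(* Expanding [p_n] in the basis [(t_i)] gives [p_n = \sum_(i <= n) 'C(n, i) p_(n-i)(z_i) t_i],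
   since [d^i p_n = n^_i p_(n-i)] and [p_0 = 1]; evaluating at 0, where [p_n] vanishes for
   [n >= 1], yields the recursion
   [t_n(0) = - \sum_(i < n) 'C(n, i) p_(n-i)(z_i) t_i(0)].
   The signed sum over ordered partitions satisfies the same recursion: removing the last
   block [C] of an ordered partition of [A] leaves an ordered partition of [A :\: C], and the
   last block contributes the factor [-p_|C|(z_|A :\: C|)]. *)
From HB Require Import structures.
From mathcomp Require Import all_boot all_order all_algebra zify.
Set Implicit Arguments. Unset Strict Implicit. Unset Printing Implicit Defensive.
Import Order.TTheory GRing.Theory Num.Theory.
Local Open Scope ring_scope.

Lemma pchar0_natr_fact_neq0 (K : fieldType) : [pchar K] =i pred0 ->
  forall n, n`!%:R != 0 :> K.
Proof. by move=> /(pcharf0P K) charK0 n; rewrite charK0 -lt0n fact_gt0. Qed.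

Lemma iter_linear_sum (R : pzRingType) (V : lmodType R) (d : {linear V -> V})
    (I : Type) (r : seq I) (a : I -> R) (q : I -> V) j :
  iter j d (\sum_(i <- r) a i *: q i) = \sum_(i <- r) a i *: iter j d (q i).
Proof.
elim: j => [|j IHj] //=; rewrite IHj linear_sum.
by apply: eq_bigr => i _; rewrite linearZ.
Qed.

Lemma graded_span (K : fieldType) (t : nat -> {poly K}) :
  (forall i, size (t i) = i.+1) ->
  forall m (q : {poly K}), (size q <= m)%N ->
  exists a : nat -> K, q = \sum_(i < m) a i *: t i.
Proof.
move=> t_size; elim=> [|m IHm] q q_size.
  exists (fun=> 0); rewrite big_ord0.
  by apply/eqP; rewrite -size_poly_eq0 -leqn0.
have lead_t : (t m)`_m != 0.
  by rewrite -[m in _`_m]/(m.+1.-1) -t_size -lead_coefE lead_coef_eq0 -size_poly_eq0 t_size.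
set c := q`_m / (t m)`_m.
have /IHm [a q_eq] : (size (q - c *: t m)%R <= m)%N.
  apply/leq_sizeP => j; rewrite leq_eqVlt coefB coefZ => /predU1P [<-|ltmj].
    by rewrite /c divfK // subrr.
  by rewrite !nth_default ?mulr0 ?subrr ?t_size // (leq_trans q_size).
exists (fun i => if i == m then c else a i).
rewrite big_ord_recr /= eqxx -[q](subrK (c *: t m)) q_eq; congr (_ + _).
by apply: eq_bigr => i _; rewrite ltn_eqF.
Qed.

Section GoncarovBasis.
Variables (K : fieldType) (d : {linear {poly K} -> {poly K}}) (z : nat -> K).
Variable t : nat -> {poly K}.
Hypothesis charK0 : [pchar K] =i pred0.
Hypothesis t_goncarov : is_goncarov_basis d z t.

Lemma goncarov_expansion m (q : {poly K}) : (size q <= m)%N ->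
  q = \sum_(i < m) ((iter i d q).[z i] / i`!%:R) *: t i.
Proof.
have [t_size t_eval] := t_goncarov.
move=> /(graded_span t_size) [a q_eq]; rewrite {1}q_eq.
apply: eq_bigr => i _; congr (_ *: _).
rewrite q_eq iter_linear_sum horner_sum (bigD1 i) //= hornerZ t_eval eqxx.
rewrite big1 ?addr0 ?mulfK ?pchar0_natr_fact_neq0 // => j ji.
by rewrite hornerZ t_eval eq_sym (negPf ji : (j : nat) == i = false) mulr0.
Qed.

Lemma goncarov0_at0 : (t 0).[0] = 1.
Proof.
have [t_size t_eval] := t_goncarov.
have /size_poly1P [c _ t0_const] : size (t 0) == 1%N by rewrite t_size.
by have := t_eval 0%N 0%N; rewrite /= t0_const !hornerC.
Qed.

Variable p : nat -> {poly K}.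
Hypothesis p_basic : is_basic_seq d p.

Lemma iter_basic_seq n i : (i <= n)%N -> iter i d (p n) = (n ^_ i)%:R *: p (n - i).
Proof.
have [_ [_ [_ dp]]] := p_basic.
elim: i => [|i IHi] lein /=; first by rewrite scale1r subn0.
rewrite IHi ?(ltnW lein) // linearZ /= dp ?subn_gt0 // scalerA -natrM -ffactnSr.
by rewrite -subnS.
Qed.

Lemma goncarov_at0_rec n : (0 < n)%N ->
  (t n).[0] = - \sum_(i < n) 'C(n, i)%:R * (p (n - i)).[z i] * (t i).[0].
Proof.
have [p_size [p0 [p_at0 _]]] := p_basic.
move=> n_gt0; have := goncarov_expansion (leqnn (size (p n))).
rewrite p_size => p_eq; have := p_at0 n n_gt0.
rewrite {1}p_eq horner_sum big_ord_recr /= hornerZ iter_basic_seq // subnn p0.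
rewrite hornerZ -polyC1 hornerC mulr1 ffactnn mulfV ?pchar0_natr_fact_neq0 // mul1r => /eqP; rewrite addrC addr_eq0 => /eqP ->.
congr (- _); apply: eq_bigr => i _; rewrite hornerZ iter_basic_seq ?(ltnW (ltn_ord i)) //.
rewrite -bin_ffact natrM hornerZ; congr (_ * _).
by rewrite mulrAC mulfK ?pchar0_natr_fact_neq0.
Qed.

End GoncarovBasis.

Section OrderedPartitions.
Variables (R : comRingType) (T : finType) (f : nat -> nat -> R).

(* For [A = [set: 'I_n]] these are convertible to [is_ordpart] and [psum]; arbitrary
   [A] is needed since removing a block leaves a partition of a smaller set. *)
Definition ordpart_of k (A : {set T}) (B : {ffun 'I_k -> {set T}}) : bool :=
  [&& [forall i, B i != set0],
      [forall i, forall j, (i != j) ==> [disjoint B i & B j]]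
    & (\bigcup_(i < k) B i == A)].

Definition block_psum k (B : {ffun 'I_k -> {set T}}) (i : 'I_k) : nat :=
  (\sum_(j < k | (j < i)%N) #|B j|)%N.

Definition ordpart_sum k (A : {set T}) : R :=
  \sum_(B : {ffun 'I_k -> {set T}} | ordpart_of A B)
     (-1) ^+ k * \prod_(i < k) f #|B i| (block_psum B i).

Lemma ordpart_of_card k (A : {set T}) (B : {ffun 'I_k -> {set T}}) : ordpart_of A B ->
  #|A| = (\sum_(i < k) #|B i|)%N.
Proof.
case/and3P=> _ /forallP disjB /eqP <-; rewrite -sum1_card partition_disjoint_bigcup.
  by apply: eq_bigr => i _; rewrite sum1_card.
by move=> i j; move: (disjB i) => /forallP /(_ j) /implyP.
Qed.

Lemma ordpart_of_size_le k (A : {set T}) (B : {ffun 'I_k -> {set T}}) : ordpart_of A B ->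
  (k <= #|A|)%N.
Proof.
move=> partB; rewrite (ordpart_of_card partB) -[k in (k <= _)%N]card_ord -sum1_card.
by case/and3P: partB => /forallP nzB _ _; apply: leq_sum => i _; rewrite card_gt0.
Qed.

Lemma ordpart_sum_gt_card k (A : {set T}) : (#|A| < k)%N -> ordpart_sum k A = 0.
Proof.
by move=> ltAk; apply: big1 => B /ordpart_of_size_le; rewrite leqNgt ltAk.
Qed.

Lemma ordpart_sum0 (A : {set T}) : ordpart_sum 0 A = (A == set0)%:R.
Proof.
have ordpart0 (B : {ffun 'I_0 -> {set T}}) : ordpart_of A B = (set0 == A).
  rewrite /ordpart_of big_ord0; apply/and3P/idP => [[] //|->].
  by split => //; apply/forallP => -[].
rewrite /ordpart_sum; under eq_bigl => B do rewrite ordpart0.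
under eq_bigr => B _ do rewrite expr0 big_ord0 mulr1.
rewrite eq_sym; case: eqP => _; last by rewrite big_pred0.
by rewrite (big_pred1 [ffun=> set0]) // => B /=; apply/esym/eqP/ffunP => -[].
Qed.

Section LastBlock.
Variable k : nat.

Definition snoc_block (x : {set T} * {ffun 'I_k -> {set T}}) : {ffun 'I_k.+1 -> {set T}} :=
  [ffun i => if unlift ord_max i is Some j then x.2 j else x.1].

Lemma snoc_block_lift x j : snoc_block x (lift ord_max j) = x.2 j.
Proof. by rewrite ffunE liftK. Qed.

Lemma snoc_block_max x : snoc_block x ord_max = x.1.
Proof. by rewrite ffunE unlift_none. Qed.

Lemma snoc_block_bij : bijective snoc_block.
Proof.
exists (fun B : {ffun 'I_k.+1 -> {set T}} => (B ord_max, [ffun j => B (lift ord_max j)])).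
  by case=> C B; rewrite snoc_block_max; congr (_, _); apply/ffunP => j;
     rewrite ffunE snoc_block_lift.
move=> B; apply/ffunP => i; rewrite ffunE.
by case: unliftP => [j ->|->] //; rewrite ffunE.
Qed.

Lemma widen_ord_lift_max (i : 'I_k) : widen_ord (leqnSn k) i = lift ord_max i.
Proof. by apply/val_inj; rewrite [RHS]lift_max. Qed.

Lemma block_psum_snoc_lift x i :
  block_psum (snoc_block x) (lift ord_max i) = block_psum x.2 i.
Proof.
have bump_i : bump k i = i by rewrite /bump leqNgt ltn_ord.
rewrite /block_psum big_mkcond big_ord_recr /= bump_i ltnNge ltnW //= addn0.
by rewrite [RHS]big_mkcond; apply: eq_bigr => j _; rewrite widen_ord_lift_max snoc_block_lift.
Qed.

Lemma block_psum_snoc_max x :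
  block_psum (snoc_block x) ord_max = (\sum_(j < k) #|x.2 j|)%N.
Proof.
rewrite /block_psum big_mkcond big_ord_recr /= ltnn addn0.
by apply: eq_bigr => j _; rewrite widen_ord_lift_max /= ltn_ord snoc_block_lift.
Qed.

Lemma forall_ord_max_lift (P : pred 'I_k.+1) :
  [forall i, P i] = P ord_max && [forall j : 'I_k, P (lift ord_max j)].
Proof.
apply/forallP/andP => [allP|[Pmax /forallP Plift] i].
  by split => //; apply/forallP.
by case: (unliftP ord_max i) => [j ->|->].
Qed.

Lemma bigcup_snoc_block x :
  \bigcup_(i < k.+1) snoc_block x i = x.1 :|: \bigcup_(j < k) x.2 j.
Proof.
rewrite big_ord_recr /= snoc_block_max setUC; congr (_ :|: _).
by apply: eq_bigr => j _; rewrite widen_ord_lift_max snoc_block_lift.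
Qed.

Lemma disjoint_snoc_block x :
  [forall i, forall j, (i != j) ==> [disjoint snoc_block x i & snoc_block x j]] =
  [disjoint x.1 & \bigcup_(j < k) x.2 j] &&
  [forall i, forall j, (i != j) ==> [disjoint x.2 i & x.2 j]].
Proof.
have lift_neq := inj_eq (@lift_inj _ ord_max).
apply/idP/andP => [/forallP disjB|[/bigcup_disjointP disj1 /forallP disj2]].
  split.
    apply/bigcup_disjointP => j _.
    have /forallP /(_ (lift ord_max j)) := disjB ord_max.
    by rewrite neq_lift snoc_block_max snoc_block_lift.
  apply/forallP => i; apply/forallP => j; apply/implyP => neq_ij.
  have /forallP /(_ (lift ord_max j)) := disjB (lift ord_max i).
  by rewrite lift_neq neq_ij !snoc_block_lift.
apply/forallP => i; apply/forallP => j; apply/implyP.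
case: (unliftP ord_max i) => [i' ->|->]; case: (unliftP ord_max j) => [j' ->|->];
  rewrite ?snoc_block_lift ?snoc_block_max ?eqxx //.
- by rewrite lift_neq; move: (disj2 i') => /forallP /(_ j') /implyP.
- by move=> _; rewrite disjoint_sym; apply: disj1.
- by move=> _; apply: disj1.
Qed.

Lemma ordpart_of_snoc_block (A : {set T}) x : ordpart_of A (snoc_block x) =
  [&& x.1 \subset A, x.1 != set0 & ordpart_of (A :\: x.1) x.2].
Proof.
rewrite /ordpart_of forall_ord_max_lift snoc_block_max disjoint_snoc_block.
rewrite bigcup_snoc_block.
have -> : [forall j, snoc_block x (lift ord_max j) != set0] = [forall j, x.2 j != set0].
  by apply: eq_forallb => j; rewrite snoc_block_lift.
case: x => C B /=; set U := \bigcup_(j < k) B j.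
apply/idP/idP.
  case/and3P => /andP [-> ->] /andP [disjCU ->] /eqP <- /=.
  rewrite subsetUl /= setDUl setDv set0U.
  by rewrite disjoint_sym in disjCU; move/setDidPl: disjCU => ->.
case/and5P => subCA -> -> -> /eqP ->.
by rewrite disjoint_sym disjoints_subset subsetDr /= -{2}(setID A C) (setIidPr subCA).
Qed.

End LastBlock.

Lemma ordpart_sumS k (A : {set T}) : ordpart_sum k.+1 A =
  - \sum_(C : {set T} | (C \subset A) && (C != set0))
       f #|C| #|A :\: C| * ordpart_sum k (A :\: C).
Proof.
rewrite /ordpart_sum (reindex (@snoc_block k)); last exact: onW_bij (snoc_block_bij k).
rewrite -sumrN; under [in RHS]eq_bigr => C _ do rewrite mulr_sumr -sumrN.
rewrite pair_big_dep; apply: eq_big => [x|x]; first by rewrite ordpart_of_snoc_block andbA.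
rewrite ordpart_of_snoc_block => /and3P [_ _ partB].
rewrite big_ord_recr /= snoc_block_max block_psum_snoc_max -(ordpart_of_card partB).
rewrite exprS mulN1r mulNr; congr (- _).
rewrite mulrA mulrC; congr (_ * (_ * _)).
by apply: eq_bigr => i _; rewrite widen_ord_lift_max snoc_block_lift block_psum_snoc_lift.
Qed.

Lemma sum_ordpart_sum_widen N (A : {set T}) : (#|A| < N)%N ->
  \sum_(k < N) ordpart_sum k A = \sum_(k < #|A|.+1) ordpart_sum k A.
Proof.
move=> ltAN; rewrite (big_ord_widen _ (ordpart_sum^~ A) ltAN) [RHS]big_mkcond /=.
apply: eq_bigr => i _; case: ifP => // /negbT; rewrite -leqNgt => ltAi.
exact: ordpart_sum_gt_card.
Qed.

Lemma sum_subsets_by_card (G : nat -> R) (A : {set T}) :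
  \sum_(C : {set T} | C \subset A) G #|C| =
  \sum_(c < #|A|.+1) 'C(#|A|, c)%:R * G c.
Proof.
rewrite (partition_big (fun C : {set T} => (inord #|C| : 'I_#|A|.+1)) predT) //=.
apply: eq_bigr => c _.
transitivity (\sum_(C in [set C : {set T} | C \subset A & #|C| == c]) G c).
  apply: eq_big => [C|C].
    rewrite inE; case subCA: (C \subset A) => //=.
    by rewrite -val_eqE /= inordK // ltnS subset_leq_card.
  by case/andP => subCA /eqP <-; rewrite inordK // ltnS subset_leq_card.
by rewrite sumr_const cards_draws mulr_natl.
Qed.

Lemma sum_ordpart_sum_rec (g : nat -> R) : g 0 = 1 ->
  (forall m, (0 < m)%N -> g m = - \sum_(i < m) 'C(m, i)%:R * f (m - i) i * g i) ->
  forall A : {set T}, \sum_(k < #|A|.+1) ordpart_sum k A = g #|A|.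
Proof.
move=> g0 gS A; have [m cardA] : {m | #|A| = m} by exists #|A|.
rewrite cardA; elim/ltn_ind: m A cardA => -[|m] IHm A cardA.
  move/eqP: cardA; rewrite cards_eq0 => /eqP ->.
  by rewrite big_ord_recl big_ord0 addr0 ordpart_sum0 eqxx g0.
rewrite big_ord_recl ordpart_sum0 -cards_eq0 cardA /= add0r gS //.
under eq_bigr => k _ do rewrite /bump /= add1n ordpart_sumS.
rewrite sumrN exchange_big /=; congr (- _).
under eq_bigr => C _ do rewrite -mulr_sumr.
have cardAC (C : {set T}) : C \subset A -> #|A :\: C| = (m.+1 - #|C|)%N.
  by move=> subCA; rewrite cardsD (setIidPr subCA) cardA.
(* Group the last blocks [C] by [c = #|C|] and reindex by [i = m.+1 - c]. *)
pose G (c : nat) : R := if c != 0%N then f c (m.+1 - c)%N * g (m.+1 - c)%N else 0.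
transitivity (\sum_(C : {set T} | C \subset A) G #|C|).
  rewrite big_mkcondr /=; apply: eq_bigr => C subCA; rewrite /G cards_eq0.
  case: eqP => [//|/eqP nzC]; have := nzC; rewrite -card_gt0 => C_gt0.
  rewrite cardAC // -(cardAC _ subCA) sum_ordpart_sum_widen ?IHm ?cardAC //; lia.
rewrite sum_subsets_by_card cardA big_ord_recl /= {1}/G eqxx mulr0 add0r.
rewrite [RHS](reindex_inj rev_ord_inj) /=.
apply: eq_bigr => i _; rewrite /G /bump /= add1n.
have lt_im := ltn_ord i.
have -> : (m.+1 - (m.+1 - i.+1) = i.+1)%N by lia.
by rewrite bin_sub // mulrA.
Qed.

End OrderedPartitions.

Theorem mainTheorem15 (K : fieldType) (hK : [pchar K] =i pred0)
  (d : {linear {poly K} -> {poly K}}) (hd : is_delta d)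
  (p : nat -> {poly K}) (hp : is_basic_seq d p)
  (z : nat -> K) (t : nat -> {poly K}) (ht : is_goncarov_basis d z t)
  (n : nat) (hn : (1 <= n)%N) :
  (t n).[0] =
    \sum_(k < n.+1)
      \sum_(B : {ffun 'I_k -> {set 'I_n}} | is_ordpart B)
        (-1) ^+ k * \prod_(i < k) (p #|B i|).[z (psum B i)].
Proof.
pose f b s := (p b).[z s].
transitivity (\sum_(k < #|[set: 'I_n]|.+1) ordpart_sum f k [set: 'I_n]); last first.
  by rewrite cardsT card_ord.
rewrite (sum_ordpart_sum_rec (g := fun i => (t i).[0])) ?cardsT ?card_ord //.
- exact: goncarov0_at0 ht.
- by move=> m m_gt0; rewrite (goncarov_at0_rec hK ht hp m_gt0).
Qed.
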